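(* Let $A$ (in $\mathcal H$) and $B$ (in $\mathcal K$) be closed densely defined operators with $A\dashv B$ via a (possibly unbounded) intertwining operator $T$. Then: (i) $\sigma_p(A)\subseteq\sigma_p(B)$; if $\xi\in D(A)$ is an eigenvector of $A$ for eigenvalue $\lambda$, then $T\xi$ is an eigenvector of $B$ for $\lambda$; hence for every $\lambda\in\sigma_p(A)$ the multiplicities satisfy $m_A(\lambda)\le m_B(\lambda)$; (ii) if $TD(A)=D(B)$ and $T^{-1}$ is bounded, then $\sigma_p(A)=\sigma_p(B)$; (iii) if $T^{-1}$ is bounded and $TD(A)$ is a core for $B$, then $\sigma_p(B)\subseteq\sigma(A)$.
   Context: A closed densely defined operator $T:D(T)\subseteq\mathcal H\to\mathcal K$ is an intertwining operator for $A$ and $B$ if $D(A)\subseteq D(T)$ and $AD(A)\subseteq D(T)$, $TD(A)\subseteq D(B)$, and $BT\xi=TA\xi$ for all $\xi\in D(A)$. $A\dashv B$ means there is such an intertwining operator $T$, injective with densely defined inverse $T^{-1}$ (defined on $R(T)$). $\sigma_p$ denotes the set of eigenvalues, $m_A(\lambda)$ the dimension of $\ker(A-\lambda I)$, and $\sigma(A)$ the spectrum (complement of the set of $\lambda$ for which $A-\lambda I$ has a bounded everywhere defined inverse). *)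

From Stdlib Require Import Reals.
Open Scope R_scope.
Set Implicit Arguments.

Definition C : Type := (R * R)%type.
Definition C0 : C := (0, 0).
Definition C1 : C := (1, 0).
Definition Cadd (a b : C) : C := (fst a + fst b, snd a + snd b).
Definition Copp (a : C) : C := (- fst a, - snd a).
Definition Cmul (a b : C) : C :=
  (fst a * fst b - snd a * snd b, fst a * snd b + snd a * fst b).
Definition Cconj (a : C) : C := (fst a, - snd a).

Record Hilbert := {
  hcar :> Type;
  hadd : hcar -> hcar -> hcar;
  hzero : hcar;
  hopp : hcar -> hcar;
  hscal : C -> hcar -> hcar;
  inner : hcar -> hcar -> C;
  hadd_assoc : forall x y z, hadd x (hadd y z) = hadd (hadd x y) z;
  hadd_comm : forall x y, hadd x y = hadd y x;
  hadd_0 : forall x, hadd x hzero = x;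
  hadd_opp : forall x, hadd x (hopp x) = hzero;
  hscal_1 : forall x, hscal C1 x = x;
  hscal_assoc : forall a b x, hscal a (hscal b x) = hscal (Cmul a b) x;
  hscal_addv : forall a x y, hscal a (hadd x y) = hadd (hscal a x) (hscal a y);
  hscal_adds : forall a b x, hscal (Cadd a b) x = hadd (hscal a x) (hscal b x);
  inner_add : forall x y z, inner (hadd x y) z = Cadd (inner x z) (inner y z);
  inner_scal : forall a x y, inner (hscal a x) y = Cmul a (inner x y);
  inner_conj : forall x y, inner y x = Cconj (inner x y);
  inner_pos : forall x, 0 <= fst (inner x x);
  inner_def : forall x, inner x x = C0 -> x = hzero;
  hcomplete : forall u : nat -> hcar,
    (forall eps, 0 < eps -> exists N, forall m n, (N <= m)%nat -> (N <= n)%nat ->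
       sqrt (fst (inner (hadd (u m) (hopp (u n))) (hadd (u m) (hopp (u n))))) < eps) ->
    exists l, forall eps, 0 < eps -> exists N, forall n, (N <= n)%nat ->
       sqrt (fst (inner (hadd (u n) (hopp l)) (hadd (u n) (hopp l)))) < eps
}.

Arguments hadd {h}. Arguments hzero {h}. Arguments hopp {h}.
Arguments hscal {h}. Arguments inner {h}.

Definition hsub {H : Hilbert} (x y : H) : H := hadd x (hopp y).
Definition hnorm {H : Hilbert} (x : H) : R := sqrt (fst (inner x x)).

Definition converges {H : Hilbert} (u : nat -> H) (l : H) : Prop :=
  forall eps, 0 < eps -> exists N, forall n, (N <= n)%nat -> hnorm (hsub (u n) l) < eps.

Definition dense {H : Hilbert} (S : H -> Prop) : Prop :=
  forall x eps, 0 < eps -> exists y, S y /\ hnorm (hsub x y) < eps.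

(* An operator T : D(T) ⊆ H -> K; the values of [app] outside [dom] are irrelevant. *)
Record op (H K : Hilbert) := { dom : H -> Prop; app : H -> K }.
Arguments dom {H K}. Arguments app {H K}.

Definition linear_op {H K : Hilbert} (T : op H K) : Prop :=
  dom T hzero /\
  (forall x y, dom T x -> dom T y -> dom T (hadd x y)) /\
  (forall a x, dom T x -> dom T (hscal a x)) /\
  (forall x y, dom T x -> dom T y -> app T (hadd x y) = hadd (app T x) (app T y)) /\
  (forall a x, dom T x -> app T (hscal a x) = hscal a (app T x)).

Definition closed_op {H K : Hilbert} (T : op H K) : Prop :=
  linear_op T /\
  forall (u : nat -> H) x y,
    (forall n, dom T (u n)) -> converges u x -> converges (fun n => app T (u n)) y ->
    dom T x /\ app T x = y.

Definition densely_defined {H K : Hilbert} (T : op H K) : Prop := dense (dom T).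

Definition closed_densely_defined {H K : Hilbert} (T : op H K) : Prop :=
  closed_op T /\ densely_defined T.

Definition intertwining {H K : Hilbert} (A : op H H) (B : op K K) (T : op H K) : Prop :=
  closed_densely_defined T /\
  (forall x, dom A x -> dom T x) /\
  (forall x, dom A x -> dom T (app A x)) /\
  (forall x, dom A x -> dom B (app T x)) /\
  (forall x, dom A x -> app B (app T x) = app T (app A x)).

Definition injective_op {H K : Hilbert} (T : op H K) : Prop :=
  forall x y, dom T x -> dom T y -> app T x = app T y -> x = y.

Definition range {H K : Hilbert} (T : op H K) (y : K) : Prop :=
  exists x, dom T x /\ app T x = y.

(* T injective with densely defined inverse T^{-1} : R(T) -> H *)
Definition inv_densely_defined {H K : Hilbert} (T : op H K) : Prop := dense (range T).

Definition quasi_affine_via {H K : Hilbert} (A : op H H) (B : op K K) (T : op H K) : Prop :=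
  intertwining A B T /\ injective_op T /\ inv_densely_defined T.

Definition inv_bounded {H K : Hilbert} (T : op H K) : Prop :=
  exists c, 0 <= c /\ forall x, dom T x -> hnorm x <= c * hnorm (app T x).

Definition shift_app {H : Hilbert} (A : op H H) (l : C) (x : H) : H :=
  hsub (app A x) (hscal l x).

Definition eigenvector {H : Hilbert} (A : op H H) (l : C) (x : H) : Prop :=
  dom A x /\ x <> hzero /\ app A x = hscal l x.

Definition point_spectrum {H : Hilbert} (A : op H H) (l : C) : Prop :=
  exists x, eigenvector A l x.

Definition resolvent_set {H : Hilbert} (A : op H H) (l : C) : Prop :=
  exists S : H -> H,
    (forall x y, S (hadd x y) = hadd (S x) (S y)) /\
    (forall a x, S (hscal a x) = hscal a (S x)) /\
    (exists c, 0 <= c /\ forall x, hnorm (S x) <= c * hnorm x) /\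
    (forall x, dom A (S x) /\ shift_app A l (S x) = x) /\
    (forall x, dom A x -> S (shift_app A l x) = x).

Definition spectrum {H : Hilbert} (A : op H H) (l : C) : Prop := ~ resolvent_set A l.

Fixpoint lincomb {H : Hilbert} (n : nat) (c : nat -> C) (v : nat -> H) : H :=
  match n with
  | O => hzero
  | S k => hadd (lincomb k c v) (hscal (c k) (v k))
  end.

Definition lin_indep {H : Hilbert} (n : nat) (v : nat -> H) : Prop :=
  forall c : nat -> C, lincomb n c v = hzero -> forall i, (i < n)%nat -> c i = C0.

Definition in_kernel {H : Hilbert} (A : op H H) (l : C) (x : H) : Prop :=
  dom A x /\ shift_app A l x = hzero.

Definition mult_ge {H : Hilbert} (A : op H H) (l : C) (n : nat) : Prop :=
  exists v : nat -> H, (forall i, (i < n)%nat -> in_kernel A l (v i)) /\ lin_indep n v.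

(* m_A(λ) <= m_B(λ), comparison in {0,1,...,∞} *)
Definition mult_le {H K : Hilbert} (A : op H H) (B : op K K) (l : C) : Prop :=
  forall n, mult_ge A l n -> mult_ge B l n.

(* D0 is a core for the closed operator B: D0 ⊆ D(B) and B|D0 has closure B,
   i.e. D0 is dense in D(B) for the graph norm *)
Definition core {K : Hilbert} (B : op K K) (D0 : K -> Prop) : Prop :=
  (forall y, D0 y -> dom B y) /\
  forall y eps, dom B y -> 0 < eps ->
    exists z, D0 z /\ hnorm (hsub y z) + hnorm (hsub (app B y) (app B z)) < eps.

Definition image_dom {H K : Hilbert} (A : op H H) (T : op H K) (y : K) : Prop :=
  exists x, dom A x /\ app T x = y.

From Pilot Require Import Defs.
From Stdlib Require Import Reals Lra Lia IndefiniteDescription.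
Open Scope R_scope.

(* (i) and (ii): T maps ker(A - λ) injectively and linearly into ker(B - λ), and
   when T D(A) = D(B) every eigenvector of B is such an image.
   (iii): if λ ∈ σ_p(B) \ σ(A), with B y = λ y, y ≠ 0, the core property gives
   x_n ∈ D(A) with T x_n -> y and B T x_n -> λ y, so T (A - λ) x_n = (B - λ) T x_n -> 0.
   Boundedness of T^{-1} and of the resolvent of A force x_n -> 0, and closedness
   of T then gives y = T 0 = 0. *)

Lemma pair_eq (a b c d : R) : a = c -> b = d -> (a, b) = (c, d).
Proof. now intros -> ->. Qed.

Section VectorAlgebra.
Context {H : Hilbert}.
Implicit Types x y z : H.

Lemma hadd_0l x : hadd hzero x = x.
Proof. rewrite hadd_comm; apply hadd_0. Qed.

Lemma hadd_cancel_l x y z : hadd x y = hadd x z -> y = z.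
Proof.
  intros E.
  assert (E2 : hadd (hopp x) (hadd x y) = hadd (hopp x) (hadd x z)) by now rewrite E.
  now rewrite !hadd_assoc, (hadd_comm _ (hopp x) x), hadd_opp, !hadd_0l in E2.
Qed.

Lemma hopp_unique x y : hadd x y = hzero -> y = hopp x.
Proof. intros E; apply (hadd_cancel_l x); now rewrite E, hadd_opp. Qed.

Lemma hadd_idem_0 x : hadd x x = x -> x = hzero.
Proof. intros E; apply (hadd_cancel_l x); now rewrite hadd_0. Qed.

Lemma hscal_v0 a : hscal a (@hzero H) = hzero.
Proof. apply hadd_idem_0; now rewrite <- hscal_addv, hadd_0. Qed.

Lemma hscal_0s x : hscal Defs.C0 x = hzero.
Proof.
  apply hadd_idem_0; rewrite <- hscal_adds; f_equal.
  unfold Cadd, Defs.C0; simpl; apply pair_eq; ring.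
Qed.

Lemma hscal_opp a x : hscal a (hopp x) = hopp (hscal a x).
Proof. apply hopp_unique; rewrite <- hscal_addv, hadd_opp; apply hscal_v0. Qed.

Lemma hopp_scal x : hopp x = hscal (-1, 0) x.
Proof.
  symmetry; apply hopp_unique.
  rewrite <- (hscal_1 H x) at 1; rewrite <- hscal_adds.
  replace (Cadd Defs.C1 (-1, 0)) with Defs.C0 by (unfold Cadd, Defs.C1, Defs.C0; simpl; apply pair_eq; ring).
  apply hscal_0s.
Qed.

Lemma hopp_0 : hopp (@hzero H) = hzero.
Proof. symmetry; apply hopp_unique, hadd_0. Qed.

Lemma hopp_opp x : hopp (hopp x) = x.
Proof. symmetry; apply hopp_unique; rewrite hadd_comm; apply hadd_opp. Qed.

Lemma hopp_add x y : hopp (hadd x y) = hadd (hopp x) (hopp y).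
Proof.
  symmetry; apply hopp_unique.
  rewrite (hadd_comm _ (hopp x)), hadd_assoc, <- (hadd_assoc _ x y), hadd_opp, hadd_0.
  apply hadd_opp.
Qed.

Lemma hsub_eq0 x y : hsub x y = hzero -> x = y.
Proof.
  unfold hsub; intros E%hopp_unique.
  now rewrite <- (hopp_opp y), E, hopp_opp.
Qed.

Lemma hsub_0 x : hsub x hzero = x.
Proof. unfold hsub; rewrite hopp_0; apply hadd_0. Qed.

Lemma hsub_swap x y : hsub y x = hopp (hsub x y).
Proof. unfold hsub; rewrite hopp_add, hopp_opp; apply hadd_comm. Qed.

Lemma hsub_sub_sub x y z : hsub x y = hsub (hsub z y) (hsub z x).
Proof.
  unfold hsub; rewrite hopp_add, hopp_opp.
  rewrite <- (hadd_assoc _ z (hopp y)), (hadd_assoc _ (hopp y)).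
  rewrite (hadd_comm _ (hopp y) (hopp z)), <- (hadd_assoc _ (hopp z)).
  rewrite (hadd_assoc _ z (hopp z)), hadd_opp, hadd_0l.
  apply hadd_comm.
Qed.

Lemma hscal_sub a x y : hscal a (hsub x y) = hsub (hscal a x) (hscal a y).
Proof. unfold hsub; now rewrite hscal_addv, hscal_opp. Qed.

Lemma inner_add_r x y z : inner x (hadd y z) = Cadd (inner x y) (inner x z).
Proof.
  rewrite inner_conj, inner_add, (inner_conj _ y x), (inner_conj _ z x).
  destruct (inner y x), (inner z x); unfold Cconj, Cadd; simpl; apply pair_eq; ring.
Qed.

Lemma inner_scal_r a x y : inner x (hscal a y) = Cmul (Cconj a) (inner x y).
Proof.
  rewrite inner_conj, inner_scal, (inner_conj _ y x).
  destruct (inner y x), a; unfold Cconj, Cmul; simpl; apply pair_eq; ring.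
Qed.

Lemma inner_self_im x : snd (inner x x) = 0.
Proof.
  pose proof (inner_conj H x x) as E; destruct (inner x x) as [p q].
  unfold Cconj in E; simpl in *; injection E; lra.
Qed.

Definition hnorm2 x : R := fst (inner x x).

Lemma hnorm2_ge0 x : 0 <= hnorm2 x.
Proof. apply inner_pos. Qed.

Lemma hnorm_ge0 x : 0 <= hnorm x.
Proof. apply sqrt_pos. Qed.

Lemma hnorm2_scal a x : hnorm2 (hscal a x) = (fst a * fst a + snd a * snd a) * hnorm2 x.
Proof.
  unfold hnorm2; rewrite inner_scal, inner_scal_r.
  pose proof (inner_self_im x) as E.
  destruct (inner x x) as [p q], a as [a1 a2]; simpl in *; subst; ring.
Qed.

Lemma hnorm_scal a x : hnorm (hscal a x) = sqrt (fst a * fst a + snd a * snd a) * hnorm x.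
Proof.
  unfold hnorm; fold (hnorm2 (hscal a x)) (hnorm2 x).
  rewrite hnorm2_scal; apply sqrt_mult_alt; nra.
Qed.

Lemma hnorm_opp x : hnorm (hopp x) = hnorm x.
Proof.
  rewrite hopp_scal, hnorm_scal; simpl.
  replace (-1 * -1 + 0 * 0) with 1 by ring; rewrite sqrt_1; ring.
Qed.

Lemma hnorm_sub_swap x y : hnorm (hsub y x) = hnorm (hsub x y).
Proof. now rewrite hsub_swap, hnorm_opp. Qed.

Lemma hnorm2_add x y : hnorm2 (hadd x y) = hnorm2 x + hnorm2 y + 2 * fst (inner x y).
Proof.
  unfold hnorm2; rewrite inner_add, !inner_add_r, (inner_conj _ x y).
  destruct (inner x y); unfold Cconj; simpl; ring.
Qed.

(* Stands in for the triangle inequality, which would need Cauchy-Schwarz. *)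
Lemma hnorm2_sub_le x y : hnorm2 (hsub x y) <= 2 * hnorm2 x + 2 * hnorm2 y.
Proof.
  unfold hsub; rewrite hnorm2_add.
  pose proof (hnorm2_add x y); pose proof (hnorm2_ge0 (hadd x y)).
  rewrite (hopp_scal y), hnorm2_scal, inner_scal_r.
  destruct (inner x y) as [p q]; simpl in *.
  pose proof (hnorm2_ge0 x); pose proof (hnorm2_ge0 y); nra.
Qed.

Lemma hnorm_sub_le x y d : hnorm x <= d -> hnorm y <= d -> hnorm (hsub x y) <= 2 * d.
Proof.
  intros Hx Hy; pose proof (hnorm_ge0 x); pose proof (hnorm_ge0 y).
  assert (Sq : forall v, hnorm2 v = hnorm v * hnorm v)
    by (intros v; symmetry; apply sqrt_sqrt, hnorm2_ge0).
  unfold hnorm at 1; fold (hnorm2 (hsub x y)).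
  rewrite <- (sqrt_square (2 * d)) by lra.
  apply sqrt_le_1_alt.
  eapply Rle_trans; [apply hnorm2_sub_le|]; rewrite !Sq; nra.
Qed.

End VectorAlgebra.

Lemma converges_of_bound {H : Hilbert} {u : nat -> H} {l : H} (k : R) :
  (forall n, hnorm (hsub (u n) l) <= k / (INR n + 1)) -> converges u l.
Proof.
  intros Hu eps He.
  destruct (INR_archimed eps k He) as [N HN]; exists N.
  intros n Hn%le_INR; pose proof (pos_INR N).
  eapply Rle_lt_trans; [apply Hu|].
  apply (Rmult_lt_reg_l (INR n + 1)); [lra|].
  field_simplify; nra.
Qed.

Section LinearOperator.
Context {H K : Hilbert} {T : op H K}.
Hypothesis linT : linear_op T.

Lemma linear_op_0 : app T hzero = hzero.
Proof.
  destruct linT as (d0 & _ & _ & aadd & _).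
  apply hadd_idem_0; rewrite <- aadd by auto; now rewrite hadd_0.
Qed.

Lemma linear_op_sub x y : dom T x -> dom T y ->
  dom T (hsub x y) /\ app T (hsub x y) = hsub (app T x) (app T y).
Proof.
  destruct linT as (d0 & dadd & dsc & aadd & asc); intros dx dy.
  assert (D : dom T (hopp y)) by (rewrite hopp_scal; auto).
  assert (E : app T (hopp y) = hopp (app T y)).
  { apply hopp_unique; rewrite <- aadd by auto; rewrite hadd_opp; apply linear_op_0. }
  unfold hsub; split; [auto|]; now rewrite aadd, E.
Qed.

Lemma linear_op_lincomb n c v : (forall i, (i < n)%nat -> dom T (v i)) ->
  dom T (lincomb n c v) /\ app T (lincomb n c v) = lincomb n c (fun i => app T (v i)).
Proof.
  destruct linT as (d0 & dadd & dsc & aadd & asc).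
  induction n as [|n IH]; intros Hv; simpl.
  - split; [auto | apply linear_op_0].
  - destruct IH as [D E].
    { intros i Hi; apply Hv; lia. }
    assert (dom T (v n)) by (apply Hv; lia).
    split; [apply dadd; auto|]; rewrite aadd, E, asc; auto.
Qed.

Hypothesis injT : injective_op T.

Lemma injective_op_eq0 x : dom T x -> app T x = hzero -> x = hzero.
Proof.
  intros dx E; apply injT; [auto | apply linT | now rewrite E, linear_op_0].
Qed.

Lemma injective_op_lin_indep n v : (forall i, (i < n)%nat -> dom T (v i)) ->
  lin_indep n v -> lin_indep n (fun i => app T (v i)).
Proof.
  intros Dv Iv c E; apply Iv.
  destruct (linear_op_lincomb n c v Dv) as [D E2].
  apply injective_op_eq0; [auto | now rewrite E2].
Qed.

End LinearOperator.

Lemma closed_op_graph_0 {H K : Hilbert} {T : op H K} (u : nat -> H) (y : K) :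
  closed_op T -> (forall n, dom T (u n)) -> converges u hzero ->
  converges (fun n => app T (u n)) y -> y = hzero.
Proof.
  intros [linT clT] Du Cu CTu.
  destruct (clT u hzero y Du Cu CTu) as [_ <-]; apply linear_op_0, linT.
Qed.

Lemma in_kernel_iff {H : Hilbert} (A : op H H) l x :
  in_kernel A l x <-> dom A x /\ app A x = hscal l x.
Proof.
  unfold in_kernel, shift_app; split; intros [D E]; split; auto.
  - now apply hsub_eq0.
  - rewrite E; apply hadd_opp.
Qed.

Lemma eigenvector_iff {H : Hilbert} (A : op H H) l x :
  eigenvector A l x <-> in_kernel A l x /\ x <> hzero.
Proof. rewrite in_kernel_iff; unfold eigenvector; tauto. Qed.

Lemma resolvent_set_bounded_below {H : Hilbert} (A : op H H) l :
  resolvent_set A l ->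
  exists c, 0 <= c /\ forall x, dom A x -> hnorm x <= c * hnorm (shift_app A l x).
Proof.
  intros (S & _ & _ & (c & c0 & Sb) & _ & SK); exists c; split; [auto|].
  intros x dx; rewrite <- (SK x dx) at 1; apply Sb.
Qed.

Lemma shift_app_eigen_sub {K : Hilbert} {B : op K K} {l y} z :
  app B y = hscal l y ->
  shift_app B l z = hsub (hscal l (hsub y z)) (hsub (app B y) (app B z)).
Proof. intros E; unfold shift_app; rewrite hscal_sub, <- E; apply hsub_sub_sub. Qed.

Section Intertwining.
Context {H K : Hilbert} {A : op H H} {B : op K K} {T : op H K}.
Hypothesis intT : intertwining A B T.

Let closedT : closed_op T := proj1 (proj1 intT).
Let linT : linear_op T := proj1 closedT.
Let dom_A_T : forall x, dom A x -> dom T x := proj1 (proj2 intT).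
Let dom_A_TA : forall x, dom A x -> dom T (app A x) := proj1 (proj2 (proj2 intT)).
Let dom_A_BT : forall x, dom A x -> dom B (app T x) := proj1 (proj2 (proj2 (proj2 intT))).
Let BT_TA : forall x, dom A x -> app B (app T x) = app T (app A x) :=
  proj2 (proj2 (proj2 (proj2 intT))).

Lemma intertwining_shift l x : dom A x ->
  dom T (shift_app A l x) /\ app T (shift_app A l x) = shift_app B l (app T x).
Proof.
  intros dx; destruct linT as (_ & _ & dsc & _ & asc).
  destruct (linear_op_sub linT (app A x) (hscal l x)) as [D E]; auto.
  unfold shift_app; split; [auto|]; rewrite E, asc, BT_TA; auto.
Qed.

Lemma intertwining_kernel l x : in_kernel A l x -> in_kernel B l (app T x).
Proof.
  intros [dx E]; split; [auto|].
  rewrite <- (proj2 (intertwining_shift l x dx)), E; apply linear_op_0, linT.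
Qed.

Hypothesis injT : injective_op T.

Lemma intertwining_eigenvector l x : eigenvector A l x -> eigenvector B l (app T x).
Proof.
  rewrite !eigenvector_iff; intros [Kx nx]; split; [now apply intertwining_kernel|].
  intros E; apply nx, (injective_op_eq0 linT injT); [apply dom_A_T, Kx | exact E].
Qed.

Lemma intertwining_mult_ge l n : mult_ge A l n -> mult_ge B l n.
Proof.
  intros [v [Kv Iv]]; exists (fun i => app T (v i)); split.
  - intros i Hi; now apply intertwining_kernel, Kv.
  - apply (injective_op_lin_indep linT injT); [|exact Iv].
    intros i Hi; apply dom_A_T, Kv, Hi.
Qed.

Lemma eigenvector_of_intertwined l x :
  dom A x -> eigenvector B l (app T x) -> eigenvector A l x.
Proof.
  intros dx; rewrite !eigenvector_iff; intros [[_ E] ny]; split.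
  - split; [auto|]; destruct (intertwining_shift l x dx) as [D ET].
    apply (injective_op_eq0 linT injT); [auto | now rewrite ET].
  - intros ->; apply ny, linear_op_0, linT.
Qed.

Hypothesis T_inv_bounded : inv_bounded T.
Hypothesis core_TDA : core B (image_dom A T).

Lemma core_approx_eigenvector l y :
  resolvent_set A l -> eigenvector B l y ->
  exists k, forall d, 0 < d ->
    exists x, dom A x /\ hnorm x <= k * d /\ hnorm (hsub (app T x) y) <= d.
Proof.
  intros (c & c0 & Rb)%resolvent_set_bounded_below [dy [_ By]].
  destruct T_inv_bounded as (c' & c'0 & Tb).
  set (m := sqrt (fst l * fst l + snd l * snd l)).
  assert (m0 : 0 <= m) by apply sqrt_pos.
  exists (c * (c' * (2 * (1 + m)))); intros d d0.
  destruct (proj2 core_TDA y d dy d0) as (z & (x & dx & <-) & Hz).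
  exists x; split; [auto|]; rewrite hnorm_sub_swap.
  pose proof (hnorm_ge0 (hsub y (app T x))).
  pose proof (hnorm_ge0 (hsub (app B y) (app B (app T x)))).
  split; [|lra].
  destruct (intertwining_shift l x dx) as [D ET].
  assert (Hw : hnorm (app T (shift_app A l x)) <= 2 * ((1 + m) * d)).
  { rewrite ET, (shift_app_eigen_sub _ By).
    apply hnorm_sub_le; [rewrite hnorm_scal; fold m|]; nra. }
  pose proof (hnorm_ge0 (shift_app A l x)).
  eapply Rle_trans; [apply Rb, dx|].
  rewrite Rmult_assoc; apply Rmult_le_compat_l; [auto|].
  eapply Rle_trans; [apply Tb, D|].
  rewrite Rmult_assoc; apply Rmult_le_compat_l; [auto | lra].
Qed.

Lemma point_spectrum_sub_spectrum l : point_spectrum B l -> spectrum A l.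
Proof.
  intros [y Ey] Rl; destruct (proj2 Ey) as [ny _].
  destruct (core_approx_eigenvector l y Rl Ey) as [k Hk].
  assert (Hd : forall n : nat, 0 < / (INR n + 1))
    by (intros n; pose proof (pos_INR n); apply Rinv_0_lt_compat; lra).
  destruct (functional_choice (fun n x => dom A x /\ hnorm x <= k * / (INR n + 1) /\
      hnorm (hsub (app T x) y) <= / (INR n + 1))) as [u Hu].
  { intros n; exact (Hk _ (Hd n)). }
  apply ny, (closed_op_graph_0 u y closedT).
  - intros n; apply dom_A_T, Hu.
  - apply (converges_of_bound k); intros n; rewrite hsub_0; apply Hu.
  - apply (converges_of_bound 1); intros n; unfold Rdiv; rewrite Rmult_1_l; apply Hu.
Qed.

End Intertwining.

Theorem proposition3p18 (H K : Hilbert) (A : op H H) (B : op K K) (T : op H K) :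
  closed_densely_defined A -> closed_densely_defined B ->
  quasi_affine_via A B T ->
  (* (i) *)
  ((forall l, point_spectrum A l -> point_spectrum B l) /\
   (forall l x, eigenvector A l x -> eigenvector B l (app T x)) /\
   (forall l, point_spectrum A l -> mult_le A B l)) /\
  (* (ii) *)
  ((forall y, image_dom A T y <-> dom B y) -> inv_bounded T ->
   forall l, point_spectrum A l <-> point_spectrum B l) /\
  (* (iii) *)
  (inv_bounded T -> core B (image_dom A T) ->
   forall l, point_spectrum B l -> spectrum A l).
Proof.
  intros _ _ [intT [injT _]].
  pose proof (intertwining_eigenvector intT injT) as eigen.
  assert (pspec : forall l, point_spectrum A l -> point_spectrum B l)
    by (intros l [x Ex]; exists (app T x); now apply eigen).
  split; [split; [|split]|split].
  - exact pspec.
  - exact eigen.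
  - intros l _ n; exact (intertwining_mult_ge intT injT l n).
  - intros TDA _ l; split; [apply pspec|].
    intros [y Ey]; destruct (proj2 (TDA y) (proj1 Ey)) as (x & dx & <-).
    exists x; exact (eigenvector_of_intertwined intT injT l x dx Ey).
  - intros Tb Tcore; exact (point_spectrum_sub_spectrum intT Tb Tcore).
Qed.
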